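(* Let $p\ge 7$ be a prime and $k=(p-1)/2$. Then $\mathsf{BO}(k,\mathbb{Z}/p\mathbb{Z})=k+1$ if the multiplicative order of $2$ modulo $p$ is odd, and $\mathsf{BO}(k,\mathbb{Z}/p\mathbb{Z})=k+2$ if the multiplicative order of $2$ modulo $p$ is even.
   Context: For a positive integer $k$, a set $\{g_1,\dots,g_k\}$ of $k$ distinct elements of a finite abelian group $G$ (written additively) is called $k$-barycentric if $\sum_{i=1}^k g_i = k\,g_j$ for some $1\le j\le k$. The $k$-th barycentric Olson constant $\mathsf{BO}(k,G)$ is the smallest integer $\ell$ such that every subset $A\subseteq G$ with $|A|\ge \ell$ contains a $k$-barycentric subset (so that always $\mathsf{BO}(k,G)\le |G|+1$). The multiplicative order of $2$ modulo $p$ is the least positive integer $t$ with $2^t\equiv 1 \pmod p$. *)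

From HB Require Import structures.
From mathcomp Require Import all_boot all_order all_algebra.
Set Implicit Arguments. Unset Strict Implicit. Unset Printing Implicit Defensive.
Import GRing.Theory.
Local Open Scope ring_scope.

Definition barycentric (G : finZmodType) (k : nat) (B : {set G}) : bool :=
  (#|B| == k)%N && [exists g in B, (\sum_(x in B) x) == g *+ k].

Definition BO_prop (G : finZmodType) (k l : nat) : bool :=
  [forall A : {set G}, (l <= #|A|)%N ==>
     [exists B : {set G}, (B \subset A) && barycentric k B]].

Lemma BO_prop_ex (G : finZmodType) (k : nat) : exists l, BO_prop G k l.
Proof.
exists (#|G|.+1); apply/forallP => A; apply/implyP => H.
by move: (max_card (mem A)); rewrite leqNgt H.
Qed.

Definition BO (G : finZmodType) (k : nat) : nat := ex_minn (BO_prop_ex G k).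

Definition mult_order2 (p t : nat) : Prop :=
  (0 < t)%N /\ (2 ^ t = 1 %[mod p])%N /\
  (forall s, (0 < s)%N -> (2 ^ s = 1 %[mod p])%N -> (t <= s)%N).

From HB Require Import structures.
From mathcomp Require Import all_boot all_order all_algebra.
From mathcomp Require Import zify ring.
Set Implicit Arguments. Unset Strict Implicit. Unset Printing Implicit Defensive.
Import GRing.Theory.
Local Open Scope ring_scope.

(* Let p >= 7 be prime, G = Z/pZ and k = (p-1)/2, so that 2k = -1 in G.
   Multiplying by the unit 2, a k-set B is barycentric iff 2 (sum B) + g = 0
   for some g in B; this reformulation drives every argument below.

   A set I of nonzero elements is "alternating" for a unit m when, for each
   x <> 0, exactly one of x and m x lies in I.  Such a set has k elements and,
   when 1 + m is a unit, sums to 0; iterating, m^j x lies in I iff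
   (j odd) xor (x in I).  Alternating sets exist for every m of even order u:
   take the x <> 0 sitting at an odd position of their m-orbit.

   Every (k+2)-set contains a barycentric k-subset
   (counting argument on A minus two points).  If the order t of 2 is odd,
   every (k+1)-set does: otherwise a translate of it, minus 0, would be
   alternating for 2, and iterating t times gives a contradiction.  For t odd, an alternating set for -2 (of order 2t) is a
   k-set of nonzero elements with sum 0, hence not barycentric.  For t even,
   {0} together with an alternating set for 2 has no barycentric k-subset. *)

Definition has_barycentric (G : finZmodType) (k : nat) (A : {set G}) : bool :=
  [exists B : {set G}, (B \subset A) && barycentric k B].

Lemma has_barycentricP (G : finZmodType) k (A : {set G}) :
  reflect (exists2 B : {set G}, B \subset A & barycentric k B) (has_barycentric k A).
Proof.
apply: (iffP existsP) => [[B /andP [BA Bb]]|[B BA Bb]]; first by exists B.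
by exists B; rewrite BA.
Qed.

Lemma has_barycentric_subset (G : finZmodType) k (A0 A : {set G}) :
  A0 \subset A -> has_barycentric k A0 -> has_barycentric k A.
Proof.
move=> A0A /has_barycentricP [B BA0 Bb]; apply/has_barycentricP; exists B => //.
exact: subset_trans BA0 A0A.
Qed.

Lemma BO_propP (G : finZmodType) k l : reflect
  (forall A : {set G}, (l <= #|A|)%N -> has_barycentric k A) (BO_prop G k l).
Proof. by apply: (iffP forallP) => H A; apply/implyP/H. Qed.

Lemma BO_prop_monotone (G : finZmodType) k l l' :
  (l <= l')%N -> BO_prop G k l -> BO_prop G k l'.
Proof.
by move=> ll' /BO_propP H; apply/BO_propP => A l'A; apply/H/(leq_trans ll').
Qed.

Lemma BO_exact (G : finZmodType) k m :
  BO_prop G k m.+1 -> ~~ BO_prop G k m -> BO G k = m.+1.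
Proof.
move=> Hm1 Hm; rewrite /BO; case: ex_minnP => n Hn Hmin.
apply/eqP; rewrite eqn_leq Hmin //= ltnNge; apply/negP => Hnm.
by move: Hm; rewrite (BO_prop_monotone Hnm Hn).
Qed.

Lemma subset_of_card (T : finType) n (A : {set T}) :
  (n <= #|A|)%N -> exists2 B : {set T}, B \subset A & #|B| = n.
Proof.
move=> nA; have [m Hm] : exists m, #|A| = (n + m)%N by exists (#|A| - n)%N; lia.
elim: m A Hm {nA} => [|m IH] A Hm; first by exists A => //; rewrite Hm addn0.
have /card_gt0P [x xA] : (0 < #|A|)%N by rewrite Hm; lia.
have [B BA cB] : exists2 B : {set T}, B \subset A :\ x & #|B| = n.
  by apply: IH; move: Hm; rewrite (cardsD1 x) xA; lia.
by exists B => //; apply: subset_trans BA (subsetDl _ _).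
Qed.

Lemma expr_inj_below_order (R : unitRingType) (m : R) u :
  m \is a GRing.unit -> (forall s, (0 < s < u)%N -> m ^+ s != 1) ->
  forall a b, (a < u)%N -> (b < u)%N -> m ^+ a = m ^+ b -> a = b.
Proof.
move=> hm hs.
suff lt_neq a b : (a < b < u)%N -> m ^+ a = m ^+ b -> False.
  move=> a b au bu e; case: (ltngtP a b) => // lab.
  - by case: (lt_neq a b _ e); rewrite lab bu.
  - by case: (lt_neq b a _ (esym e)); rewrite lab au.
move=> /andP [ab bu] e.
have e1 : m ^+ (b - a) = 1.
  apply: (mulrI (unitrX a hm)); rewrite -exprD subnKC ?mulr1 //; exact: ltnW.
have : (0 < b - a < u)%N by lia.
by move/hs; rewrite e1 eqxx.
Qed.

Lemma unit_neq0 (R : unitRingType) (m : R) : m \is a GRing.unit -> m != 0.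
Proof. by apply: contraTneq => ->; rewrite unitr0. Qed.

Section PrimeCyclic.
Variable p : nat.
Hypothesis p_prime : prime p.
Hypothesis p_ge7 : (7 <= p)%N.
Local Notation G := 'Z_p.
Local Notation k := ((p - 1) %/ 2)%N.

Let p_gt1 : (1 < p)%N. Proof. exact: leq_trans p_ge7. Qed.

Lemma card_Zp_prime : #|{: G}| = p.
Proof. by rewrite card_ord Zp_cast. Qed.

Lemma double_k_succ : (k * 2).+1 = p.
Proof.
have [p_odd | p_even] := boolP (odd p); first by have := modn2 p; rewrite p_odd /=; lia.
by have := prime_oddPn p_prime p_even; move: p_ge7 => /[swap] ->.
Qed.

Lemma Zp_natr_eq0 n : ((n%:R : G) == 0) = (p %| n)%N.
Proof.
apply/eqP/idP => [H|H].
  by have := congr1 val H; rewrite /= val_Zp_nat // => /eqP.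
by apply: val_inj; rewrite /= val_Zp_nat //; apply/eqP.
Qed.

Lemma Zp_unit (x : G) : x != 0 -> x \is a GRing.unit.
Proof.
move=> x0; rewrite -[x]natr_Zp unitZpE // prime_coprime //.
apply/negP => /dvdn_leq x_ge_p.
have x_lt_p : (val x < p)%N by case: x {x0 x_ge_p} => m /=; rewrite Zp_cast.
have : (0 < val x)%N.
  by rewrite lt0n; apply: contra x0 => /eqP x_eq0; apply/eqP; apply: val_inj.
by move/x_ge_p; rewrite leqNgt x_lt_p.
Qed.

Lemma Zp_mulf_eq0 (x y : G) : (x * y == 0) = (x == 0) || (y == 0).
Proof.
have [->|x0] := eqVneq x 0; first by rewrite mul0r eqxx.
by rewrite mulrI_eq0 //; apply/mulrI/Zp_unit.
Qed.

Lemma Zp_natr_unit n : (0 < n < p)%N -> (n%:R : G) \is a GRing.unit.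
Proof.
move=> /andP [n0 np]; apply: Zp_unit; rewrite Zp_natr_eq0.
by apply/negP => /(dvdn_leq n0); rewrite leqNgt np.
Qed.

Lemma unit2 : (2 : G) \is a GRing.unit.
Proof. by apply: Zp_natr_unit; lia. Qed.

Lemma unit3 : (3 : G) \is a GRing.unit.
Proof. by apply: Zp_natr_unit; lia. Qed.

Lemma unit10 : (10 : G) \is a GRing.unit.
Proof.
have -> : (10 : G) = 2 * 5 by ring.
by rewrite unitrM unit2 Zp_natr_unit //; lia.
Qed.

Lemma two_neq0 : (2 : G) != 0.
Proof. exact: unit_neq0 unit2. Qed.

Lemma k_times2 : (k%:R : G) * 2 = -1.
Proof.
apply/eqP; rewrite -addr_eq0; apply/eqP.
have : ((k * 2).+1%:R : G) = 0 by rewrite double_k_succ; apply/eqP; rewrite Zp_natr_eq0.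
by rewrite mulrSr natrM.
Qed.

Lemma barycentricE (B : {set G}) : barycentric k B =
  (#|B| == k) && [exists g in B, (\sum_(x in B) x) * 2 + g == 0].
Proof.
congr (_ && _); apply: eq_existsb => g; congr (_ && _).
by rewrite -(inj_eq (mulIr unit2)) /= -[g *+ k]mulr_natr -mulrA k_times2 mulrN1 addr_eq0.
Qed.

Lemma sum_Zp : \sum_(x : G) x = 0.
Proof.
set s := \sum_(x : G) x.
have s_opp : s = - s by rewrite /s {1}(reindex_inj (@oppr_inj _)) /= sumrN.
have : (2 : G) * s = 0 by rewrite mulr2n mulrDl mul1r {1}s_opp addNr.
by move/eqP; rewrite Zp_mulf_eq0 (negbTE two_neq0) => /eqP.
Qed.

Lemma Zp_natr_inj a b : ((a%:R : G) = b%:R) <-> (a = b %[mod p])%N.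
Proof.
split => [/(congr1 val)|E]; first by rewrite /= !val_Zp_nat.
by apply: val_inj; rewrite /= !val_Zp_nat.
Qed.

Lemma pow2_Zp n : ((2 : G) ^+ n = 1) <-> (2 ^ n = 1 %[mod p])%N.
Proof. by rewrite -natrX; apply: (Zp_natr_inj _ 1). Qed.

Definition alternating (I : {set G}) (m : G) :=
  forall x, x != 0 -> (m * x \in I) = ~~ (x \in I).

Section Alternating.
Variables (I : {set G}) (m : G).
Hypotheses (m_unit : m \is a GRing.unit) (I_nz : forall x, x \in I -> x != 0).

Let zero_notin : (0 : G) \notin I.
Proof. by apply/negP => /I_nz; rewrite eqxx. Qed.

Let I_sub : I \subset [set~ 0].
Proof. by apply/subsetP => x /I_nz; rewrite !inE. Qed.

(* x |-> m x maps I onto the complement of I in G \ {0}, so |I| = k. *)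
Lemma alternating_card : alternating I m -> #|I| = k.
Proof.
move=> altI; set J := [set~ (0 : G)] :\: I.
have preJ : (fun x => m * x) @^-1: J = I.
  apply/setP => x; rewrite !inE; have [->|x0] := eqVneq x 0.
    by rewrite mulr0 eqxx /= andbF (negbTE zero_notin).
  by rewrite Zp_mulf_eq0 (negbTE (unit_neq0 m_unit)) (negbTE x0) altI // negbK andbT.
have cJ : #|J| = #|I| by rewrite -preJ card_preimset //; exact: mulrI.
have := cardsID I [set~ (0 : G)]; rewrite (setIidPr I_sub) cJ cardsC1 card_Zp_prime.
by have := double_k_succ; lia.
Qed.

(* Summing over G = {0} + I + m I gives (1 + m) (sum I) = 0. *)
Lemma alternating_sum : alternating I m -> (1 + m) \is a GRing.unit ->
  \sum_(x in I) x = 0.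
Proof.
move=> altI unit1m; have := sum_Zp; rewrite (bigID (fun x => x \in I)) /=.
rewrite [X in _ + X](reindex_inj (mulrI m_unit)) /=.
rewrite [X in _ + X](bigID (fun x => x \in I)) /=.
rewrite [X in _ + (_ + X)]big1 ?addr0; last first.
  move=> x /andP [mxNI xI]; have [->|x0] := eqVneq x 0; first by rewrite mulr0.
  by move: mxNI; rewrite altI // xI.
rewrite [X in _ + X](eq_bigl (fun x => x \in I)); last first.
  move=> x /=; have [xI|xNI] := boolP (x \in I); rewrite ?andbF ?andbT //.
  by rewrite altI ?xI // I_nz.
rewrite -mulr_sumr => sum0.
by apply: (mulrI unit1m); rewrite mulr0 -[RHS]sum0; ring.
Qed.

Lemma alternating_iter : alternating I m ->
  forall j x, x != 0 -> (m ^+ j * x \in I) = odd j (+) (x \in I).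
Proof.
move=> altI; elim=> [|j IH] x x0; first by rewrite expr0 mul1r.
have mjx0 : m ^+ j * x != 0.
  by rewrite Zp_mulf_eq0 negb_or x0 andbT unit_neq0 // unitrX.
by rewrite exprS -mulrA altI // IH //= addNb.
Qed.

(* A set of at least k nonzero elements disjoint from its image under m is
   alternating: it already fills half of G \ {0}. *)
Lemma alternating_of_disjoint : (k <= #|I|)%N ->
  (forall x, x \in I -> m * x \notin I) -> alternating I m.
Proof.
move=> cI disj; have m0 := unit_neq0 m_unit.
set J := [set~ (0 : G)] :\: I; set P := (fun x => m * x) @^-1: J.
have IP : I \subset P.
  by apply/subsetP => x xI; rewrite !inE disj // Zp_mulf_eq0 negb_or m0 I_nz.
have cP : #|P| = #|J| by rewrite card_preimset //; exact: mulrI.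
have := cardsID I [set~ (0 : G)]; rewrite (setIidPr I_sub) cardsC1 card_Zp_prime -/J.
have := double_k_succ; have := subset_leq_card IP.
move: cP cI; set a := #|I|; set b := #|J|; set c := #|P| => *.
have /subset_cardP /(_ IP) IeqP : #|I| = #|P| by lia.
move=> x x0; have := IeqP x; rewrite !inE Zp_mulf_eq0 negb_or m0 x0 /= => ->.
by rewrite andbT negbK.
Qed.

End Alternating.

(* Existence: for m of even order u, the nonzero x whose position in their
   m-orbit is odd form an alternating set; the position of x is the exponent
   j < u minimizing the representative of x m^j. *)
Section OddPositions.
Variables (m : G) (u : nat).
Hypotheses (u_gt0 : (0 < u)%N) (u_even : ~~ odd u) (m_u : m ^+ u = 1).
Hypothesis m_ord : forall s, (0 < s < u)%N -> m ^+ s != 1.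

Let m_unit : m \is a GRing.unit.
Proof. by rewrite -(unitrX_pos _ u_gt0) m_u unitr1. Qed.

Let m_pow_inj := expr_inj_below_order m_unit m_ord.

Let expr_mod a : m ^+ (a %% u) = m ^+ a.
Proof. by rewrite {2}(divn_eq a u) exprD mulnC exprM m_u expr1n mul1r. Qed.

Definition orbit_position (x : G) : 'I_u :=
  fintype.arg_min (Ordinal u_gt0) xpredT (fun j : 'I_u => val (x * m ^+ j)).

Definition odd_positions : {set G} :=
  [set x : G | (x != 0) && odd (orbit_position x)].

Lemma odd_positions_nz x : x \in odd_positions -> x != 0.
Proof. by rewrite inE => /andP []. Qed.

(* Multiplying by m moves the position one step back (cyclically mod u). *)
Lemma orbit_position_mul x : x != 0 ->
  m ^+ ((orbit_position (m * x)).+1 %% u) = m ^+ (orbit_position x).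
Proof.
move=> x0; rewrite /orbit_position.
case: arg_minnP => // j1 _ min1; case: arg_minnP => // j0 _ min0.
have le10 : leq (val (m * x * m ^+ j1)) (val (x * m ^+ j0)).
  set o := Ordinal (ltn_pmod (j0 + u.-1) u_gt0).
  have -> : x * m ^+ j0 = m * x * m ^+ o.
    rewrite /= expr_mod -mulrA mulrCA -exprS -addnS prednK //.
    by rewrite exprD m_u mulr1.
  exact: min1.
have le01 : leq (val (x * m ^+ j0)) (val (m * x * m ^+ j1)).
  set o := Ordinal (ltn_pmod j1.+1 u_gt0).
  have -> : m * x * m ^+ j1 = x * m ^+ o by rewrite /= expr_mod exprS mulrCA mulrA.
  exact: min0.
have E : m * x * m ^+ j1 = x * m ^+ j0.
  by apply: val_inj; apply/eqP; rewrite eqn_leq le10 le01.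
by apply: (mulrI (Zp_unit x0)); rewrite -E expr_mod exprS; ring.
Qed.

Lemma odd_positions_alternating : alternating odd_positions m.
Proof.
move=> x x0; have mx0 : m * x != 0.
  by rewrite Zp_mulf_eq0 negb_or x0 andbT unit_neq0.
rewrite !inE mx0 x0 /=.
have := m_pow_inj (ltn_pmod _ u_gt0) (ltn_ord _) (orbit_position_mul x0).
have := ltn_ord (orbit_position (m * x)).
move: (val (orbit_position (m * x))) (val (orbit_position x)) => j1 j0 j1u.
case: (ltngtP j1.+1 u) => [lt_u|gt_u|eq_u].
- by rewrite modn_small // => <- /=; case: odd.
- by lia.
- by rewrite eq_u modnn => <- /=; move: u_even; rewrite -eq_u /=; case: odd.
Qed.

End OddPositions.

Lemma neq_of_sub_unit_mul (y z w c : G) :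
  c \is a GRing.unit -> w != 0 -> y - z = c * w -> y != z.
Proof.
move=> c_unit w0 E; apply/negP => /eqP yz; move: E; rewrite yz subrr => /esym/eqP.
by rewrite Zp_mulf_eq0 (negbTE (unit_neq0 c_unit)) (negbTE w0).
Qed.

Lemma barycentric_drop1 (B0 : {set G}) a g : #|B0| = k.+1 ->
  a \in B0 -> g \in B0 -> g != a -> (\sum_(x in B0) x - a) * 2 + g = 0 ->
  has_barycentric k B0.
Proof.
move=> cB0 aB0 gB0 ga sum_eq; apply/has_barycentricP; exists (B0 :\ a).
  exact: subsetDl.
rewrite barycentricE; apply/andP; split.
  by move: cB0; rewrite (cardsD1 a) aB0; lia.
apply/existsP; exists g; rewrite !inE ga gB0 /=.
rewrite (big_setD1 _ aB0) /= in sum_eq.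
by apply/eqP; rewrite -[RHS]sum_eq; congr (_ * _ + _); ring.
Qed.

Lemma barycentric_drop2 (A0 : {set G}) a b g : #|A0| = k.+2 ->
  a \in A0 -> b \in A0 -> g \in A0 -> b != a -> g != a -> g != b ->
  (\sum_(x in A0) x - a - b) * 2 + g = 0 -> has_barycentric k A0.
Proof.
move=> cA0 aA0 bA0 gA0 ba ga gb sum_eq; apply/has_barycentricP.
exists (A0 :\ a :\ b); first exact: subset_trans (subsetDl _ _) (subsetDl _ _).
have bA0a : b \in A0 :\ a by rewrite !inE ba bA0.
rewrite barycentricE; apply/andP; split.
  by move: cA0; rewrite (cardsD1 a) aA0 (cardsD1 b (A0 :\ a)) bA0a; lia.
apply/existsP; exists g; rewrite !inE ga gb gA0 /=.
rewrite (big_setD1 _ aA0) (big_setD1 _ bA0a) /= in sum_eq.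
by apply/eqP; rewrite -[RHS]sum_eq; congr (_ * _ + _); ring.
Qed.

Section KPlusTwo.
Variable A0 : {set G}.
Hypotheses (cA0 : #|A0| = k.+2) (noB : ~~ has_barycentric k A0).
Local Notation S := (\sum_(x in A0) x).

Let no_triple a b g : a \in A0 -> b \in A0 -> g \in A0 ->
  b != a -> g != a -> g != b -> (S - a - b) * 2 + g != 0.
Proof.
move=> aA0 bA0 gA0 ba ga gb; apply: contra noB => /eqP sum_eq.
exact: barycentric_drop2 sum_eq.
Qed.

(* For a in A0 the map f b = 2a + 2b - 2S hits A0 on at least two points of
   A0 \ {a}; any such b other than the fixed point b2 = 2S - 2a of f would
   give a triple (a, b, f b) unless f b = a, which happens at most once. *)
Lemma reflection_mem a : a \in A0 -> (S * 2 - a * 2 \in A0) /\ (S * 2 - a * 2 != a).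
Proof.
move=> aA0; set f := fun b => a * 2 + b * 2 - S * 2; set b2 := S * 2 - a * 2.
have f_inj : injective f.
  move=> b b' /addIr /addrI; exact: (mulIr unit2).
set R := (A0 :\ a) :&: f @^-1: A0.
have cR : (2 <= #|R|)%N.
  have cX : #|A0 :\ a| = k.+1 by move: cA0; rewrite (cardsD1 a) aA0; lia.
  have cY : #|f @^-1: A0| = k.+2 by rewrite card_preimset.
  have := cardsUI (A0 :\ a) (f @^-1: A0); rewrite -/R cX cY.
  have := subset_leq_card (subsetT (A0 :\ a :|: f @^-1: A0)).
  rewrite cardsT card_Zp_prime.
  by have := double_k_succ; lia.
have R_to_a : R :\ b2 \subset f @^-1: [set a].
  apply/subsetP => b; rewrite !inE => /andP [bb2 /andP [/andP [ba bA0] fbA0]].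
  apply/negPn/negP => fba.
  have fbb : f b != b.
    apply: contra bb2 => /eqP fb_eq; apply/eqP; apply/eqP; rewrite -subr_eq0.
    have -> : b - b2 = f b - b by rewrite /f /b2; ring.
    by rewrite fb_eq subrr.
  by have := no_triple aA0 bA0 fbA0 ba fba fbb; rewrite /f; apply/negP/negPn/eqP; ring.
have := subset_leq_card R_to_a; rewrite card_preimset // cards1 => le1.
have [b2R|b2NR] := boolP (b2 \in R); last first.
  by move: cR; rewrite (cardsD1 b2 R) (negbTE b2NR) add0n ltnNge le1.
by move: b2R; rewrite !inE => /andP [/andP [b2a b2A0] _].
Qed.

(* Reflecting twice: with b2 = 2S - 2a and b = 2S - 2 b2, the triple
   (a, b, 10a - 6S) is excluded only if 10a - 6S lies outside A0. *)
Lemma double_reflection_notin a : a \in A0 -> a * 10 - S * 6 \notin A0.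
Proof.
move=> aA0; have [b2A0 b2a] := reflection_mem aA0.
have [bA0 _] := reflection_mem b2A0.
set b2 := S * 2 - a * 2 in b2A0 b2a bA0; set b := S * 2 - b2 * 2 in bA0.
have d0 : b2 - a != 0 by rewrite subr_eq0.
apply/negP => gA0.
have ba : b != a.
  by apply: (@neq_of_sub_unit_mul _ _ _ (-1) _ d0); rewrite ?unitrN ?unitr1 // /b /b2; ring.
have ga : a * 10 - S * 6 != a.
  by apply: (@neq_of_sub_unit_mul _ _ _ (-3) _ d0); rewrite ?unitrN ?unit3 // /b2; ring.
have gb : a * 10 - S * 6 != b.
  by apply: (@neq_of_sub_unit_mul _ _ _ (-2) _ d0); rewrite ?unitrN ?unit2 // /b /b2; ring.
by have := no_triple aA0 bA0 gA0 ba ga gb; apply/negP/negPn/eqP; rewrite /b /b2; ring.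
Qed.

(* So x |-> 10x - 6S injects A0 (k+2 points) into its complement (k-1 points). *)
Lemma k_plus_two_contra : False.
Proof.
pose psi x := x * 10 - S * 6.
have psi_inj : injective psi by move=> x y /addIr; exact: (mulIr unit10).
have : A0 \subset psi @^-1: ~: A0.
  by apply/subsetP => a aA0; rewrite !inE double_reflection_notin.
move/subset_leq_card; rewrite card_preimset // => le_compl.
by have := cardsC A0; rewrite card_Zp_prime cA0; have := double_k_succ; lia.
Qed.

End KPlusTwo.

Lemma has_barycentric_k_plus_two (A : {set G}) : (k.+2 <= #|A|)%N ->
  has_barycentric k A.
Proof.
move=> cA; have [A0 A0A cA0] := subset_of_card cA.
apply: has_barycentric_subset A0A _.
by have [//|noB] := boolP (has_barycentric k A0); case: (k_plus_two_contra cA0 noB).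
Qed.

(* A unit of odd order admits no alternating set: iterating t times would
   move 1 in and out of it. *)
Lemma alternating_odd_order_contra (I : {set G}) (m : G) t :
  m \is a GRing.unit -> alternating I m -> m ^+ t = 1 -> odd t -> False.
Proof.
move=> m_unit altI m_t t_odd.
have := alternating_iter m_unit altI t (oner_neq0 _).
by rewrite m_t mul1r t_odd; case: (1 \in I).
Qed.

(* A (k+1)-set B0 without barycentric k-subset has no pair a <> g with
   2 (S - a) + g = 0, S = sum B0.  Translating by -2S turns this into
   "x and 2x are never both in the translate", so the translate minus 0
   is alternating for 2. *)
Lemma alternating_of_k_plus_one (B0 : {set G}) :
  #|B0| = k.+1 -> ~~ has_barycentric k B0 ->
  exists2 I : {set G}, (forall x, x \in I -> x != 0) & alternating I 2.
Proof.
move=> cB0 noB; set c := (\sum_(x in B0) x) * 2.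
set I := ((fun x => x + c) @^-1: B0) :\ 0.
have I_nz x : x \in I -> x != 0 by rewrite !inE => /andP [].
exists I => //; apply: alternating_of_disjoint unit2 I_nz _ _.
  have : #|(fun x => x + c) @^-1: B0| = k.+1.
    by rewrite card_preimset ?cB0 //; exact: addIr.
  rewrite (cardsD1 0) -/I; case: (0 \in _); rewrite ?add1n ?add0n => /eqP;
  by rewrite ?eqSS => /eqP ->; rewrite ?leqnSn.
move=> x; rewrite /I !inE => /andP [x0 xB0]; apply/negP => /andP [_ x2B0].
have ne : 2 * x + c != x + c.
  by apply: (@neq_of_sub_unit_mul _ _ _ 1 _ x0); rewrite ?unitr1 //; ring.
move: noB; rewrite (barycentric_drop1 cB0 xB0 x2B0 ne) //.
by rewrite /c; ring.
Qed.

(* Lower bound k: a k-set of nonzero elements with sum 0 is its own only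
   k-subset and is not barycentric, since its witness g would be 0. *)
Lemma not_BO_prop_k (I : {set G}) : (forall x, x \in I -> x != 0) ->
  #|I| = k -> \sum_(x in I) x = 0 -> ~~ BO_prop G k k.
Proof.
move=> I_nz cI sumI; apply/negP => /BO_propP /(_ I).
rewrite cI leqnn => /(_ isT) /has_barycentricP [B BI].
rewrite barycentricE => /andP [/eqP cB /existsP [g /andP [gB /eqP g_eq]]].
have BeqI : B = I by apply/setP/subset_cardP; rewrite ?cB ?cI.
by move: g_eq gB; rewrite BeqI sumI mul0r add0r => -> /I_nz; rewrite eqxx.
Qed.

(* Lower bound k + 1: adjoin 0 to such a set I, assumed alternating for 2.
   Dropping 0 gives I (no witness); dropping a in I leaves sum -a, whose
   witness would be 2a, which is nonzero and outside I. *)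
Lemma not_BO_prop_k_succ (I : {set G}) : (forall x, x \in I -> x != 0) ->
  alternating I 2 -> #|I| = k -> \sum_(x in I) x = 0 -> ~~ BO_prop G k k.+1.
Proof.
move=> I_nz altI cI sumI; have zero_notin : (0 : G) \notin I.
  by apply/negP => /I_nz; rewrite eqxx.
set A := 0 |: I; have cA : #|A| = k.+1 by rewrite cardsU1 zero_notin cI.
apply/negP => /BO_propP /(_ A); rewrite cA leqnn => /(_ isT).
move=> /has_barycentricP [B BA].
rewrite barycentricE => /andP [/eqP cB /existsP [g /andP [gB /eqP g_eq]]].
have /cards1P [a AB_a] : #|A :\: B| == 1%N.
  by rewrite cardsD (setIidPr BA) cA cB subSnn.
have aA : a \in A by have := set11 a; rewrite -AB_a inE => /andP [].
have aNB : a \notin B by have := set11 a; rewrite -AB_a inE => /andP [].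
have sumB : \sum_(x in B) x = - a.
  have : \sum_(x in A) x = 0 by rewrite big_setU1 //= sumI addr0.
  rewrite (big_setID B) (setIidPr BA) AB_a big_set1 => /eqP.
  by rewrite addr_eq0 => /eqP.
have ga : g = a * 2 by apply/eqP; rewrite -subr_eq0 -g_eq sumB; apply/eqP; ring.
have [a0|a0] := eqVneq a 0; first by move: gB aNB; rewrite ga a0 mul0r => ->.
have aI : a \in I by move: aA; rewrite !inE (negbTE a0).
have := subsetP BA g gB; rewrite !inE ga mulrC altI // aI orbF.
by rewrite Zp_mulf_eq0 (negbTE two_neq0) (negbTE a0).
Qed.

Section OrderOfTwo.
Variable t : nat.
Hypothesis t_order : mult_order2 p t.

Let t_gt0 : (0 < t)%N. Proof. by case: t_order. Qed.

Lemma two_pow_order : (2 : G) ^+ t = 1.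
Proof. by case: t_order => _ [/pow2_Zp]. Qed.

Lemma two_pow_neq1 s : (0 < s < t)%N -> (2 : G) ^+ s != 1.
Proof.
case/andP => s_gt0 s_lt; apply/negP => /eqP /pow2_Zp two_s.
by case: t_order => _ [_ /(_ s s_gt0 two_s)]; rewrite leqNgt s_lt.
Qed.

Lemma order_dvd n : (2 : G) ^+ n = 1 -> (t %| n)%N.
Proof.
move=> two_n; have two_mod : (2 : G) ^+ (n %% t)%N = 1.
  by move: two_n; rewrite {1}(divn_eq n t) exprD mulnC exprM two_pow_order expr1n mul1r.
apply/eqP; apply: contraTeq (introT eqP two_mod) => mod_n0; apply: two_pow_neq1.
by rewrite lt0n mod_n0 ltn_pmod.
Qed.

Lemma neg2_pow_neq1 : odd t -> forall s, (0 < s < t * 2)%N -> (-2 : G) ^+ s != 1.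
Proof.
move=> t_odd s /andP [s_gt0 s_lt]; apply/negP => /eqP neg2_s.
have /order_dvd : (2 : G) ^+ (s * 2) = 1.
  by rewrite mulnC exprM -sqrrN -exprM mulnC exprM neg2_s expr1n.
rewrite Gauss_dvdl ?coprimen2 // => /dvdnP [q s_eq].
have q1 : q = 1%N by subst s; nia.
move: neg2_s; rewrite s_eq q1 mul1n exprNn two_pow_order mulr1 -signr_odd t_odd.
rewrite expr1 => neg1_eq1; move: two_neq0.
have -> : (2 : G) = 1 - -1 by ring.
by rewrite neg1_eq1 subrr eqxx.
Qed.

Lemma exists_alternating_sum0 (m : G) u : (0 < u)%N -> ~~ odd u -> m ^+ u = 1 ->
  (forall s, (0 < s < u)%N -> m ^+ s != 1) -> (1 + m) \is a GRing.unit ->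
  exists I : {set G}, [/\ forall x, x \in I -> x != 0, alternating I m,
                          #|I| = k & \sum_(x in I) x = 0].
Proof.
move=> u_gt0 u_even m_u m_ord unit1m.
have m_unit : m \is a GRing.unit.
  by rewrite -(unitrX_pos _ u_gt0) m_u unitr1.
have I_nz := @odd_positions_nz m u u_gt0.
have altI := odd_positions_alternating u_gt0 u_even m_u m_ord.
exists (odd_positions m u_gt0); split => //.
- exact: alternating_card m_unit I_nz altI.
- exact: alternating_sum m_unit I_nz altI unit1m.
Qed.

Lemma BO_prop_upper : BO_prop G k (if odd t then k.+1 else k.+2).
Proof.
apply/BO_propP => A; case: ifP => [t_odd|_]; last first.
  exact: has_barycentric_k_plus_two.
move=> cA; have [B0 B0A cB0] := subset_of_card cA.
apply: has_barycentric_subset B0A _.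
have [//|noB] := boolP (has_barycentric k B0).
have [I I_nz altI] := alternating_of_k_plus_one cB0 noB.
by case: (alternating_odd_order_contra unit2 altI two_pow_order t_odd).
Qed.

Lemma BO_prop_lower : ~~ BO_prop G k (if odd t then k else k.+1).
Proof.
case: ifP => [t_odd|t_even].
  have u_gt0 : (0 < t * 2)%N by rewrite muln_gt0 t_gt0.
  have u_even : ~~ odd (t * 2) by rewrite oddM andbF.
  have neg2_u : (-2 : G) ^+ (t * 2) = 1.
    by rewrite mulnC exprM sqrrN exprAC two_pow_order expr1n.
  have unit_neg1 : (1 + -2 : G) \is a GRing.unit.
    have -> : (1 + -2 : G) = -1 by ring.
    by rewrite unitrN unitr1.
  have [I [I_nz _ cI sumI]] :=
    exists_alternating_sum0 u_gt0 u_even neg2_u (neg2_pow_neq1 t_odd) unit_neg1.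
  exact: not_BO_prop_k I_nz cI sumI.
have unit_3 : (1 + 2 : G) \is a GRing.unit.
  have -> : (1 + 2 : G) = 3 by ring.
  exact: unit3.
have [I [I_nz altI cI sumI]] :=
  exists_alternating_sum0 t_gt0 (negbT t_even) two_pow_order two_pow_neq1 unit_3.
exact: not_BO_prop_k_succ I_nz altI cI sumI.
Qed.

End OrderOfTwo.

End PrimeCyclic.

Theorem mainTheorem7 (p : nat) (hp : prime p) (h7 : (7 <= p)%N) (t : nat)
    (ht : mult_order2 p t) :
  BO ('Z_p : finZmodType) ((p - 1) %/ 2)
    = (if odd t then ((p - 1) %/ 2).+1 else ((p - 1) %/ 2).+2)%N.
Proof.
have upper := BO_prop_upper hp h7 ht; have lower := BO_prop_lower hp h7 ht.
by case: ifP upper lower => _; apply: BO_exact.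
Qed.
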